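(* Let $\rho$ be a representation of $D^{2,2,2}$ and let $\{i,j,k\}=\{1,2,3\}$. 1. Suppose $a,b\in D^{2,2,2}$ satisfy one of the following: (i) $x_i+x_jx_k\subseteq a$; (ii) $x_i+x_jx_k\subseteq b$; (iii) $x_i\subseteq a$ and $x_jx_k\subseteq b$; (iv) $x_i\subseteq b$ and $x_jx_k\subseteq a$. Then $\psi_i(ab)=\psi_i(a)\cap\psi_i(b)$ (and $\psi_i(a+b)=\psi_i(a)+\psi_i(b)$). 2. For every $n\ge 0$ and every $b\in D^{2,2,2}$: $$\psi_i(ba^{ij}_n)=\psi_i(b)\cap\psi_i(a^{ij}_n),\qquad \psi_j(ba^{ij}_n)=\psi_j(b)\cap\psi_j(a^{ij}_n),\qquad \psi_i(bA^{ij}_n)=\psi_i(b)\cap\psi_i(A^{ij}_n).$$ 3. For every $b\in D^{2,2,2}$, $\psi_i(b+x_i)=\psi_i(b)$.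
   Context: $D^{2,2,2}$ is the modular lattice generated by $x_1,y_1,x_2,y_2,x_3,y_3$ subject only to $x_i\subseteq y_i$ ($i=1,2,3$), with a greatest element $I$ adjoined. Meet is written $ab$, join $a+b$. Atomic elements: for distinct $i,j$, let $k$ denote the third index. Define - $a^{ij}_0=I$ and $a^{ij}_n=x_i+y_ja^{jk}_{n-1}$ for $n\ge1$; - $A^{ij}_0=I$ and $A^{ij}_n=y_i+x_jA^{ki}_{n-1}$ for $n\ge1$. A representation $\rho$ of $D^{2,2,2}$ in a finite-dimensional vector space $X_0$ is a lattice morphism from $D^{2,2,2}$ to the subspace lattice of $X_0$, with $\rho(I)=X_0$. Write $X_i=\rho(x_i)\subseteq Y_i=\rho(y_i)$. Put $R=Y_1\oplus Y_2\oplus Y_3$ and $X^1_0=\{(\eta_1,\eta_2,\eta_3)\in R:\sum\eta_i=0\}$. Define subspaces of $R$: - $G_i$: triples with $i$-th coordinate in $Y_i$ and the others $0$; - $G'_i$: triples with $i$-th coordinate in $X_i$; - $H'_i$: triples with $i$-th coordinate $0$. $\Phi^+\rho$ is the representation in $X^1_0$ with $\Phi^+\rho(y_i)=G'_i\cap X^1_0$, $\Phi^+\rho(x_i)=H'_i\cap X^1_0$, $\Phi^+\rho(I)=X^1_0$. Set $\nu^1(a)=\Phi^+\rho(a)\subseteq R$. The joint map is $\psi_i(a)=X^1_0+G_i\cap(H'_i+\nu^1(a))$. *)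

From HB Require Import structures.
From mathcomp Require Import all_boot all_order all_algebra.
Set Implicit Arguments. Unset Strict Implicit. Unset Printing Implicit Defensive.
Import Order.TTheory GRing.Theory.
Local Open Scope ring_scope.

(* Lattice terms over the generators x_1,y_1,x_2,y_2,x_3,y_3 (indices 'I_3)
   and the adjoined top I.  Elements of D^{2,2,2} are such terms, identified
   up to the equivalence induced by Dle below. *)
Inductive term : Type :=
| Gx of 'I_3
| Gy of 'I_3
| Top
| Meet of term & term
| Join of term & term.

Fixpoint teval (T : Type) (jn mt : T -> T -> T) (top : T)
  (gx gy : 'I_3 -> T) (t : term) : T :=
  match t with
  | Gx l => gx l
  | Gy l => gy l
  | Top => top
  | Meet a b => mt (teval jn mt top gx gy a) (teval jn mt top gx gy b)
  | Join a b => jn (teval jn mt top gx gy a) (teval jn mt top gx gy b)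
  end.

Definition modular_lattice (d : Order.disp_t) (L : tLatticeType d) : Prop :=
  forall x y z : L, (x <= z)%O -> (x `|` (y `&` z))%O = ((x `|` y) `&` z)%O.

(* The order of D^{2,2,2}: a <= b holds in the free modular lattice on
   x_i <= y_i with a top adjoined iff it holds under every valuation in
   every modular lattice with top (sending I to the top). *)
Definition Dle (a b : term) : Prop :=
  forall (d : Order.disp_t) (L : tLatticeType d), modular_lattice L ->
  forall gx gy : 'I_3 -> L, (forall l, (gx l <= gy l)%O) ->
  (teval Order.join Order.meet \top gx gy a <= teval Order.join Order.meet \top gx gy b)%O.

(* the third index k of {i,j,k} = {0,1,2} (for i != j) *)
Definition third (i j : 'I_3) : 'I_3 := inord (3 - i - j)%N.

Fixpoint atom_a (n : nat) (i j : 'I_3) : term :=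
  match n with
  | 0 => Top
  | n'.+1 => Join (Gx i) (Meet (Gy j) (atom_a n' j (third i j)))
  end.

Fixpoint atom_A (n : nat) (i j : 'I_3) : term :=
  match n with
  | 0 => Top
  | n'.+1 => Join (Gy i) (Meet (Gx j) (atom_A n' (third i j) i))
  end.

Section Rep.
Variables (F : fieldType) (vT : vectType F).
(* A representation rho of D^{2,2,2} in X_0 = fullv is determined by
   X_i = rho(x_i) <= Y_i = rho(y_i); rho(a) is the evaluation below. *)
Variables (X Y : 'I_3 -> {vspace vT}).

Definition rep (a : term) : {vspace vT} :=
  teval (fun U V => (U + V)%VS) (fun U V => (U :&: V)%VS) fullv X Y a.

Definition V3 := {ffun 'I_3 -> vT}.

Definition inj (l : 'I_3) (v : vT) : V3 := [ffun m => if m == l then v else 0].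

Definition embed (l : 'I_3) (U : {vspace vT}) : {vspace V3} :=
  (<< map (inj l) (vbasis U) >>)%VS.

Definition Rsp : {vspace V3} := (\sum_(l < 3) embed l (Y l))%VS.

Definition sum3 (f : V3) : vT := \sum_(l < 3) f l.

Definition X10 : {vspace V3} := (Rsp :&: lker (linfun sum3))%VS.

Definition Gsp (i : 'I_3) : {vspace V3} := embed i (Y i).
Definition G'sp (i : 'I_3) : {vspace V3} :=
  (\sum_(l < 3) embed l (if l == i then X l else Y l))%VS.
Definition H'sp (i : 'I_3) : {vspace V3} :=
  (\sum_(l < 3 | l != i) embed l (Y l))%VS.

Definition nu1 (a : term) : {vspace V3} :=
  teval (fun U V => (U + V)%VS) (fun U V => (U :&: V)%VS) X10
    (fun l => H'sp l :&: X10)%VS (fun l => G'sp l :&: X10)%VS a.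

Definition psi (i : 'I_3) (a : term) : {vspace V3} :=
  (X10 + (Gsp i :&: (H'sp i + nu1 a)))%VS.
End Rep.

(* psi_i(a) = X + (G :&: (H + nu(a))) with G = G_i, H = H'_i, X = X^1_0, where
   G :&: H = 0, G :&: X = 0 and nu(a) <= X <= G + H. In this configuration the modular
   law makes psi_i additive, shows psi_i(a + (H :&: X)) = psi_i(a), and makes psi_i
   preserve meets as soon as H :&: X <= nu(a). Since H :&: X = nu(x_i), the latter
   holds whenever x_i <= a in D^{2,2,2}; and x_i <= a^{ij}_n, x_j <= a^{ij}_n (using
   x_j <= y_j and induction) and x_i <= y_i <= A^{ij}_n. *)

From HB Require Import structures.
From mathcomp Require Import all_boot all_order all_algebra.
Set Implicit Arguments. Unset Strict Implicit. Unset Printing Implicit Defensive.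
Import Order.TTheory GRing.Theory.
Local Open Scope ring_scope.

Section JointMap.
Local Open Scope vspace_scope.
Variables (K : fieldType) (W : vectType K).

Lemma capv_add_direct (U V S : {vspace W}) :
  U :&: V = 0 -> S <= U -> U :&: (V + S) = S.
Proof.
move=> capUV sSU.
by rewrite capvC addvC -vspace_modl // capvC capUV addv0.
Qed.

Variables (G H X : {vspace W}).
Hypotheses (capGH : G :&: H = 0) (capGX : G :&: X = 0).

Definition jmap (A : {vspace W}) := X + (G :&: (H + A)).

Lemma addv_cap_proj A : A <= G + H -> H + (G :&: (H + A)) = H + A.
Proof.
move=> sA; rewrite vspace_modl ?addvSl //; apply/capv_idPr.
by rewrite subv_add addvSl addvC.
Qed.

Lemma jmap_add A B : A <= G + H -> B <= G + H -> jmap (A + B) = jmap A + jmap B.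
Proof.
move=> sA sB; rewrite /jmap.
have -> : H + (A + B) = H + ((G :&: (H + A)) + (G :&: (H + B))).
  rewrite [RHS]addvA addv_cap_proj // (addvC H A) -addvA addv_cap_proj //.
  by rewrite addvA (addvC H) -addvA.
rewrite (capv_add_direct capGH) ?subv_add ?capvSl //.
by rewrite [in RHS]addvA [X + _ + X]addvC [in RHS]addvA addvv -addvA.
Qed.

Lemma capv_addl_distr_sub A B : A <= X -> B <= X -> H :&: X <= A ->
  (H + A) :&: (H + B) = H + (A :&: B).
Proof.
move=> sAX sBX sHX_A; rewrite -vspace_modl ?addvSl //.
have -> : A :&: (H + B) = A :&: B + H :&: X.
  rewrite -{1}(capv_idPl sAX) -capvA [X :&: _]capvC addvC -vspace_modl //.
  by rewrite vspace_modr.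
by rewrite (addvC (A :&: B)) addvA (addv_idPl (capvSl H X)).
Qed.

Lemma capv_addl_distr_direct P Q : P <= G -> Q <= G -> (X + P) :&: (X + Q) = X + (P :&: Q).
Proof.
move=> sPG sQG; rewrite capvC -vspace_modl ?addvSl //.
by rewrite -{1}(capv_idPl sQG) -capvA (capv_add_direct capGX sPG) capvC.
Qed.

Lemma jmap_cap A B : A <= X -> B <= X -> H :&: X <= A ->
  jmap (A :&: B) = jmap A :&: jmap B.
Proof.
move=> sAX sBX sHX_A; rewrite /jmap capv_addl_distr_direct ?capvSl //.
by rewrite [_ :&: _ :&: _]Monoid.mulmACA /= capvv capv_addl_distr_sub.
Qed.

Lemma jmap_addHX A : jmap (A + H :&: X) = jmap A.
Proof.
by rewrite /jmap addvA [H + A]addvC -addvA (addv_idPl (capvSl H X)) [A + H]addvC.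
Qed.

End JointMap.

Section SubspaceLattice.
Variables (K : fieldType) (W : vectType K).

Definition vspace_lattice : Type := {vspace W}.
HB.instance Definition _ := Choice.on vspace_lattice.
HB.instance Definition _ := Order.Le_isPOrder.Build (Order.Disp tt tt) vspace_lattice
  (@subvv K W) (@subv_anti K W) (@subv_trans K W).
HB.instance Definition _ := Order.POrder_MeetJoin_isLattice.Build (Order.Disp tt tt)
  vspace_lattice (@subv_cap K W) (@subv_add K W).
HB.instance Definition _ :=
  Order.hasTop.Build (Order.Disp tt tt) vspace_lattice (@subvf K W).

Lemma vspace_lattice_modular : modular_lattice vspace_lattice.
Proof. exact: vspace_modl. Qed.

End SubspaceLattice.

Lemma Dle_trans a b c : Dle a b -> Dle b c -> Dle a c.
Proof.
move=> Dab Dbc d L modL gx gy lexy.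
exact: le_trans (Dab d L modL gx gy lexy) (Dbc d L modL gx gy lexy).
Qed.

Lemma Dle_joinl a b : Dle a (Join a b).
Proof. by move=> d L _ gx gy _ /=; exact: leUl. Qed.

Lemma Dle_Gx_atom_a n i j : Dle (Gx i) (atom_a n i j).
Proof. by case: n => [|n] d L _ gx gy _ /=; [exact: lex1 | exact: leUl]. Qed.

Lemma Dle_Gx_atom_a_snd n i j : Dle (Gx j) (atom_a n i j).
Proof.
case: n => [|n] d L modL gx gy lexy /=; first exact: lex1.
apply: le_trans (leUr _ _); rewrite lexI lexy.
exact: (Dle_Gx_atom_a n j (third i j) modL lexy).
Qed.

Lemma Dle_Gx_atom_A n i j : Dle (Gx i) (atom_A n i j).
Proof.
case: n => [|n] d L _ gx gy lexy /=; first exact: lex1.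
exact: le_trans (lexy i) (leUl _ _).
Qed.

Section Triples.
Variables (F : fieldType) (vT : vectType F) (X Y : 'I_3 -> {vspace vT}).

Lemma inj_is_linear l : linear (@inj F vT l).
Proof.
move=> a u v; apply/ffunP=> m; rewrite !ffunE.
by case: (m == l); rewrite ?scaler0 ?addr0.
Qed.
HB.instance Definition _ l :=
  GRing.isLinear.Build F vT (V3 vT) *:%R (@inj F vT l) (inj_is_linear l).

Lemma sum3_is_linear : linear (@sum3 F vT).
Proof.
move=> a u v; rewrite /sum3 scaler_sumr -big_split; apply: eq_bigr => m _.
by rewrite !ffunE.
Qed.
HB.instance Definition _ :=
  GRing.isLinear.Build F (V3 vT) vT *:%R (@sum3 F vT) sum3_is_linear.

Lemma injE l (u : vT) m : inj l u m = if m == l then u else 0.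
Proof. by rewrite ffunE. Qed.

Lemma sum3_inj l (u : vT) : sum3 (inj l u) = u.
Proof.
rewrite /sum3 (bigD1 l) //= injE eqxx big1 ?addr0 // => m hm.
by rewrite injE (negbTE hm).
Qed.

Lemma embedE l U : embed l U = (linfun (@inj F vT l) @: U)%VS.
Proof.
rewrite -[in RHS](span_basis (vbasisP U)) limg_span /embed.
by congr (<< _ >>%VS); apply: eq_map => x; rewrite lfunE.
Qed.

Lemma mem_embedP l (U : {vspace vT}) v :
  v \in embed l U -> exists2 u, u \in U & v = inj l u.
Proof. by rewrite embedE => /memv_imgP [u uU ->]; exists u; rewrite ?lfunE. Qed.

Lemma memGsp l v : v \in Gsp Y l -> v = inj l (v l).
Proof. by move=> /mem_embedP [u _ ->]; rewrite injE eqxx. Qed.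

Lemma memH'sp l v : v \in H'sp Y l -> v l = 0.
Proof.
move=> /memv_sumP [vs Hvs ->]; rewrite sum_ffunE big1 // => m hm.
by have [u _ ->] := mem_embedP (Hvs m hm); rewrite injE eq_sym (negbTE hm).
Qed.

Lemma memX10 v : v \in X10 Y -> sum3 v = 0.
Proof. by rewrite memv_cap memv_ker lfunE => /andP[_ /eqP]. Qed.

Lemma Gsp_capH'sp l : (Gsp Y l :&: H'sp Y l = 0)%VS.
Proof.
apply/eqP; rewrite -subv0; apply/subvP => v; rewrite memv_cap memv0.
by case/andP=> vG vH; rewrite (memGsp vG) (memH'sp vH) linear0.
Qed.

Lemma Gsp_capX10 l : (Gsp Y l :&: X10 Y = 0)%VS.
Proof.
apply/eqP; rewrite -subv0; apply/subvP => v; rewrite memv_cap memv0.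
case/andP=> vG /memX10; rewrite (memGsp vG) sum3_inj => ->.
by rewrite linear0.
Qed.

Lemma X10_sub_GH'sp l : (X10 Y <= Gsp Y l + H'sp Y l)%VS.
Proof. by apply: subv_trans (capvSl _ _) _; rewrite /Rsp (bigD1 l). Qed.

Lemma H'sp_sub_G'sp l : (H'sp Y l <= G'sp X Y l)%VS.
Proof.
apply/subv_sumP => m hm; apply: (sumv_sup m) => //.
by rewrite (negbTE hm) subvv.
Qed.

End Triples.

Section Nu1.
Variables (F : fieldType) (vT : vectType F) (X Y : 'I_3 -> {vspace vT}).
Local Open Scope vspace_scope.

(* Phi^+ rho evaluated with I sent to the whole space instead of X^1_0, so that it
   is an evaluation in the lattice of all subspaces, as required by [Dle]. *)
Definition nu1_full (t : term) : {vspace V3 vT} :=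
  teval (fun U V => U + V) (fun U V => U :&: V) fullv
    (fun l => H'sp Y l :&: X10 Y) (fun l => G'sp X Y l :&: X10 Y) t.

Lemma nu1_full_cases t : nu1_full t <= X10 Y \/ nu1_full t = fullv.
Proof.
elim: t => [l|l||a IHa b IHb|a IHa b IHb] /=; try by [left; rewrite capvSr | right].
  rewrite /nu1_full /= -/(nu1_full a) -/(nu1_full b).
  case: IHa => [saX|->]; first by left; rewrite (subv_trans (capvSl _ _) saX).
  by rewrite capfv.
rewrite /nu1_full /= -/(nu1_full a) -/(nu1_full b).
case: IHa IHb => [saX|->] [sbX|->]; try by right; rewrite ?addvf // addvC addvf.
by left; rewrite subv_add saX.
Qed.

Lemma nu1E t : nu1 X Y t = nu1_full t :&: X10 Y.
Proof.
elim: t => [l|l||a IHa b IHb|a IHa b IHb]; rewrite /nu1 /nu1_full /=.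
- by rewrite -capvA capvv.
- by rewrite -capvA capvv.
- by rewrite capfv.
- rewrite -/(nu1 X Y a) -/(nu1 X Y b) -/(nu1_full a) -/(nu1_full b) IHa IHb.
  by rewrite [LHS]Monoid.mulmACA /= capvv.
rewrite -/(nu1 X Y a) -/(nu1 X Y b) -/(nu1_full a) -/(nu1_full b) IHa IHb.
case: (nu1_full_cases a) => [saX|->]; first by rewrite (capv_idPl saX) vspace_modl.
case: (nu1_full_cases b) => [sbX|->]; last by rewrite !addvv capfv.
by rewrite (capv_idPl sbX) addvC vspace_modl // addvC.
Qed.

Lemma nu1_sub_X10 t : nu1 X Y t <= X10 Y.
Proof. by rewrite nu1E capvSr. Qed.

Lemma Dle_nu1 a b : Dle a b -> nu1 X Y a <= nu1 X Y b.
Proof.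
move=> Dab; rewrite !nu1E capvS //.
apply: (Dab _ (vspace_lattice (V3 vT)) (@vspace_lattice_modular _ _)) => l.
exact: capvS (H'sp_sub_G'sp X Y l) (subvv _).
Qed.

End Nu1.

Section JointMapOfRep.
Variables (F : fieldType) (vT : vectType F) (X Y : 'I_3 -> {vspace vT}).

Lemma psiE l a : psi X Y l a = jmap (Gsp Y l) (H'sp Y l) (X10 Y) (nu1 X Y a).
Proof. by []. Qed.

Lemma psi_join l a b : psi X Y l (Join a b) = (psi X Y l a + psi X Y l b)%VS.
Proof.
have sub_GH t := subv_trans (nu1_sub_X10 X Y t) (X10_sub_GH'sp Y l).
by rewrite !psiE; apply: jmap_add; [exact: Gsp_capH'sp | exact: sub_GH ..].
Qed.

Lemma psi_join_Gx l b : psi X Y l (Join b (Gx l)) = psi X Y l b.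
Proof. exact: jmap_addHX. Qed.

Lemma psi_meet_Dle_l l a b : Dle (Gx l) a ->
  psi X Y l (Meet a b) = (psi X Y l a :&: psi X Y l b)%VS.
Proof.
move=> Da; rewrite !psiE; apply: jmap_cap; rewrite ?nu1_sub_X10 //.
  exact: Gsp_capX10.
exact: (Dle_nu1 X Y Da).
Qed.

Lemma psi_meet_Dle l a b : Dle (Gx l) a \/ Dle (Gx l) b ->
  psi X Y l (Meet a b) = (psi X Y l a :&: psi X Y l b)%VS.
Proof.
case=> [Da|Db]; first exact: psi_meet_Dle_l.
have nu1C : nu1 X Y (Meet a b) = nu1 X Y (Meet b a) := capvC _ _.
by rewrite psiE nu1C capvC; apply: psi_meet_Dle_l.
Qed.

End JointMapOfRep.

(* Part 1 only uses x_i <= a or x_i <= b. *)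
Theorem mainTheorem6 (F : fieldType) (vT : vectType F)
  (X Y : 'I_3 -> {vspace vT}) (hXY : forall l, (X l <= Y l)%VS)
  (i j k : 'I_3) (hij : i != j) (hjk : j != k) (hik : i != k) :
  (forall a b : term,
     [\/ Dle (Join (Gx i) (Meet (Gx j) (Gx k))) a,
         Dle (Join (Gx i) (Meet (Gx j) (Gx k))) b,
         Dle (Gx i) a /\ Dle (Meet (Gx j) (Gx k)) b
       | Dle (Gx i) b /\ Dle (Meet (Gx j) (Gx k)) a] ->
     psi X Y i (Meet a b) = (psi X Y i a :&: psi X Y i b)%VS /\
     psi X Y i (Join a b) = (psi X Y i a + psi X Y i b)%VS)
  /\
  (forall (n : nat) (b : term),
     [/\ psi X Y i (Meet b (atom_a n i j)) = (psi X Y i b :&: psi X Y i (atom_a n i j))%VS,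
         psi X Y j (Meet b (atom_a n i j)) = (psi X Y j b :&: psi X Y j (atom_a n i j))%VS
       & psi X Y i (Meet b (atom_A n i j)) = (psi X Y i b :&: psi X Y i (atom_A n i j))%VS])
  /\
  (forall b : term, psi X Y i (Join b (Gx i)) = psi X Y i b).
Proof.
split; [|split].
- move=> a b cases; split; last exact: psi_join.
  apply: psi_meet_Dle.
  have Dle_Gx := Dle_trans (Dle_joinl (Gx i) (Meet (Gx j) (Gx k))).
  by case: cases => [/Dle_Gx|/Dle_Gx|[]|[]]; auto.
- move=> n b; split; apply: psi_meet_Dle; right.
  + exact: Dle_Gx_atom_a.
  + exact: Dle_Gx_atom_a_snd.
  + exact: Dle_Gx_atom_A.
- exact: psi_join_Gx.
Qed.
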